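(* Let $p$ be an odd prime and let $a,b,c$ be positive integers such that $c$ is a primitive divisor of $p^a-1$ and $bc$ is a primitive divisor of $p^{ab}-1$. If $bc$ is odd, then $$\Gamma\Big(\tfrac{p^{ab}-1}{bc},\,p^{ab}\Big)\;\cong\;\vec{\square}^{\,b}\,\Gamma\Big(\tfrac{p^a-1}{c},\,p^a\Big),$$ the directed Cartesian product of $b$ copies of $\Gamma(\tfrac{p^a-1}{c},p^a)$.
   Context: An integer $e$ is a primitive divisor of $p^a-1$ if $e\mid p^a-1$ and $e\nmid p^t-1$ for every $1\le t<a$. For a prime power $q$ and $k\mid q-1$, the generalized Paley graph $\Gamma(k,q)$ is the Cayley digraph $\mathrm{Cay}(\mathbb{F}_q,R_k)$ with $R_k=\{x^k:x\in\mathbb{F}_q^*\}$: vertex set $\mathbb{F}_q$, with an arc from $u$ to $v$ iff $v-u\in R_k$ (two opposite arcs are regarded as one undirected edge). The directed Cartesian product $\Gamma_1\,\vec{\square}\cdots\vec{\square}\,\Gamma_b$ of digraphs has vertex set $V(\Gamma_1)\times\cdots\times V(\Gamma_b)$, with an arc from $(v_i)$ to $(w_i)$ iff there is exactly one $j$ with $v_jw_j$ an arc of $\Gamma_j$ and $v_i=w_i$ for all $i\ne j$. *)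

From HB Require Import structures.
From mathcomp Require Import all_boot all_order all_algebra all_fingroup all_field.
Set Implicit Arguments. Unset Strict Implicit. Unset Printing Implicit Defensive.
Import GRing.Theory.

Definition primitive_divisor (e p a : nat) : Prop :=
  (e %| p ^ a - 1)%N /\ (forall t : nat, (0 < t)%N -> (t < a)%N -> ~~ (e %| p ^ t - 1)%N).

(* Arc relation of the generalized Paley digraph Gamma(k, F) = Cay(F, R_k),
   R_k = { x^k : x in F^* }: arc u -> v iff v - u in R_k. *)
Definition paley_arc (F : finFieldType) (k : nat) : rel F :=
  fun u v => [exists x : F, (x != 0)%R && (v - u == x ^+ k)%R].

Definition dcart_pow (V : finType) (e : rel V) (b : nat) : rel {ffun 'I_b -> V} :=
  fun f g =>
    #|[set j : 'I_b | e (f j) (g j) && [forall i : 'I_b, (i != j) ==> (f i == g i)]]| == 1%N.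

Definition digraph_iso (V W : finType) (e1 : rel V) (e2 : rel W) : Prop :=
  exists phi : V -> W, bijective phi /\ forall u v, e1 u v = e2 (phi u) (phi v).
Arguments paley_arc : clear implicits.
Arguments dcart_pow V e b : clear implicits.

From HB Require Import structures.
From mathcomp Require Import all_boot all_order all_algebra all_fingroup all_field.
From mathcomp Require Import cyclic.

(* Write q = p^a and fix an embedding psi of K into F together with a
   primitive (bc)-th root of unity g in F.  Since bc is a primitive divisor of
   q^b - 1, the Frobenius conjugates g^(q^j), j < b, are pairwise distinct, so
   no nonzero polynomial of degree < b with coefficients in psi(K) vanishes at
   g: the map h |-> sum_i psi(h_i) g^i is an additive bijection K^b -> F.  Both
   connection sets are groups of roots of unity (of order bc in F, of order c
   in K), and as g^b generates the c-th roots of unity, the (bc)-th roots of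
   unity are exactly the images of the vectors with one nonzero coordinate,
   which is a c-th root of unity.  Hence the bijection maps arcs to arcs. *)

Set Implicit Arguments.
Unset Strict Implicit.
Unset Printing Implicit Defensive.
Import GRing.Theory.
Open Scope ring_scope.

Lemma expf_card_pred (E : finFieldType) (x : E) : x != 0 -> x ^+ #|E|.-1 = 1.
Proof.
move=> x_nz; apply: (mulfI x_nz); rewrite -exprS prednK ?expf_card ?mulr1 //.
exact: ltnW (finNzRing_gt1 E).
Qed.

Lemma expf_cardX (E : finFieldType) (x : E) m : x ^+ (#|E| ^ m) = x.
Proof. by elim: m => [|m IHm]; rewrite ?expn0 // expnS mulnC exprM IHm expf_card. Qed.

Lemma finField_prim_root (E : finFieldType) (d : nat) :
  (d %| #|E|.-1)%N -> exists z : E, d.-primitive_root z.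
Proof.
have E_gt1 := finNzRing_gt1 E.
have /hasP[u _ u_prim] : has (#|E|.-1).-primitive_root (enum [pred x : E | x != 0]).
  apply: has_prim_root; first by rewrite -ltnS prednK // ltnW.
  - by apply/allP => x; rewrite mem_enum unity_rootE => /expf_card_pred ->.
  - exact: enum_uniq.
  by rewrite -cardE cardC1.
by move=> d_dvd; exists (u ^+ (#|E|.-1 %/ d)); apply: dvdn_prim_root.
Qed.

Lemma expf_eq1_powers (E : finFieldType) d (x : E) : (d %| #|E|.-1)%N ->
  (x ^+ d == 1) = [exists y : E, (y != 0) && (x == y ^+ (#|E|.-1 %/ d))].
Proof.
move=> d_dvd; apply/idP/existsP => [/eqP xd1 | [y /andP[y_nz /eqP->]]].
  have [u u_prim] := finField_prim_root (dvdnn #|E|.-1).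
  have [i ->] := prim_rootP (dvdn_prim_root u_prim d_dvd) xd1.
  exists (u ^+ i); rewrite -!exprM mulnC eqxx andbT expf_neq0 // (prim_root_eq0 u_prim).
  by rewrite -lt0n -subn1 subn_gt0 finNzRing_gt1.
by rewrite -exprM divnK // expf_card_pred.
Qed.

Lemma paley_arcE (E : finFieldType) d (u v : E) : (d %| #|E|.-1)%N ->
  paley_arc E (#|E|.-1 %/ d) u v = ((v - u) ^+ d == 1).
Proof. by move=> d_dvd; rewrite expf_eq1_powers. Qed.

Lemma dcart_powE (V : finType) (e : rel V) b f g : irreflexive e ->
  dcart_pow V e b f g =
    [exists j, e (f j) (g j) && [forall i, (i != j) ==> (f i == g i)]].
Proof.
move=> e_irr; apply/cards1P/existsP => [[j Sj] | [j /andP[e_j /forallP fg_j]]].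
  by exists j; have := set11 j; rewrite -Sj inE.
exists j; apply/setP => k; rewrite !inE; apply/idP/eqP => [/andP[e_k _] | ->].
  apply/eqP; apply: contraTT e_k => k_j.
  by have /implyP/(_ k_j)/eqP-> := fg_j k; rewrite e_irr.
by rewrite e_j; apply/forallP.
Qed.

Section RmorphFactor.

Variables (A R S : nzRingType) (f : {rmorphism A -> R}) (g : {rmorphism A -> S}).
Hypotheses (f_onto : forall x, exists a, f a == x) (ker_fg : forall a, f a = 0 -> g a = 0).

Definition rmorph_factor of (forall a, f a = 0 -> g a = 0) :=
  fun x => g (xchoose (f_onto x)).
Local Notation h := (rmorph_factor ker_fg).

Lemma rmorph_factorE a : h (f a) = g a.
Proof.
apply/eqP; rewrite -subr_eq0 -rmorphB ker_fg // rmorphB.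
by rewrite (eqP (xchooseP (f_onto (f a)))) subrr.
Qed.

Fact rmorph_factor_is_zmod_morphism : zmod_morphism h.
Proof.
move=> x y; have [[a /eqP<-] [b /eqP<-]] := (f_onto x, f_onto y).
by rewrite -rmorphB !rmorph_factorE rmorphB.
Qed.

Fact rmorph_factor_is_monoid_morphism : monoid_morphism h.
Proof.
split=> [|x y]; first by rewrite -(rmorph1 f) rmorph_factorE rmorph1.
have [[a /eqP<-] [b /eqP<-]] := (f_onto x, f_onto y).
by rewrite -rmorphM !rmorph_factorE rmorphM.
Qed.

HB.instance Definition _ := GRing.isZmodMorphism.Build R S h
  rmorph_factor_is_zmod_morphism.
HB.instance Definition _ := GRing.isMonoidMorphism.Build R S h
  rmorph_factor_is_monoid_morphism.

End RmorphFactor.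

Lemma finField_genPoly_dvdp_root (E : finFieldType) (P : {poly E}) :
  (1 < size P)%N -> P %| 'X^#|E| - 'X -> exists x, root P x.
Proof.
rewrite finField_genPoly => P_gt1 /dvdp_prod_XsubC[m].
case: (mask m _) => [|x s] Pm.
  by move: P_gt1; rewrite (eqp_size Pm) big_nil size_poly1.
by exists x; rewrite (eqp_root Pm) root_prod_XsubC mem_head.
Qed.

Lemma finField_rmorph_exists (K F : finFieldType) p n :
  p \in [pchar K] -> p \in [pchar F] -> #|F| = (#|K| ^ n)%N ->
  inhabited {rmorphism K -> F}.
Proof.
(* A generator w of K^* is sent to a root z in F of its minimal polynomial
   over 'F_p, which exists as this polynomial divides 'X^#|F| - 'X. *)
move=> pK pF cardF; pose L := pPrimeCharType pK; pose M := pPrimeCharType pF.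
have [w w_prim] := finField_prim_root (dvdnn #|K|.-1).
have [q Dq] := polyOver1P (minPolyOver 1 (w : L)).
have ker_w r : horner_alg (w : L) r = 0 -> q %| r.
  move=> rw0; rewrite -(dvdp_map (in_alg L)) -Dq minPoly_dvdp //.
    by apply/polyOver1P; exists r.
  exact/rootP.
have [z qz] : exists z : M, root (map_poly (in_alg M) q) z.
  apply: finField_genPoly_dvdp_root.
    by rewrite size_map_poly -(size_map_poly (in_alg L)) -Dq size_minPoly.
  have : q %| 'X^#|F| - 'X.
    by apply: ker_w; rewrite rmorphB rmorphXn /= horner_algX cardF expf_cardX subrr.
  by rewrite -(dvdp_map (in_alg M)) rmorphB rmorphXn /= map_polyX.
have onto_w (x : L) : exists r, horner_alg (w : L) r == x.
  have [-> | x_nz] := eqVneq x 0; first by exists 0; rewrite rmorph0.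
  have [i ->] := prim_rootP w_prim (expf_card_pred x_nz).
  by exists 'X^i; rewrite rmorphXn /= horner_algX.
have ker_wz r : horner_alg (w : L) r = 0 -> horner_alg z r = 0.
  by move/ker_w/dvdpP => [s ->]; rewrite rmorphM /= [horner_alg z q](rootP qz) mulr0.
pose psi : {rmorphism L -> M} := rmorph_factor onto_w ker_wz.
by constructor; exact: psi.
Qed.

Lemma root_exp_pchar (R : comNzRingType) N (P : {poly R}) x :
  [pchar R].-nat N -> (forall i, P`_i ^+ N = P`_i) -> root P x -> root P (x ^+ N).
Proof.
move=> charN P_fixed; have /andP[N_gt0 _] := charN.
have exp0 : (0 : R) ^+ N = 0 by rewrite expr0n gtn_eqF.
rewrite !rootE => /eqP Px0; apply/eqP; rewrite -exp0 -{}Px0 !horner_coef.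
rewrite (big_morph (fun y => y ^+ N) (fun y z => exprDn_pchar y z charN) exp0).
by apply: eq_bigr => i _; rewrite exprMn P_fixed -!exprM mulnC.
Qed.

Lemma conj_roots_poly_eq0 (R : idomainType) N n (P : {poly R}) x :
  [pchar R].-nat N -> (forall i, P`_i ^+ N = P`_i) -> (size P <= n)%N ->
  uniq [seq x ^+ (N ^ j) | j <- iota 0 n] -> root P x -> P = 0.
Proof.
move=> charN P_fixed sizeP conj_uniq Px0; apply/eqP; apply: contraTT sizeP => P_nz.
have roots_conj : all (root P) [seq x ^+ (N ^ j) | j <- iota 0 n].
  apply/allP => _ /mapP[j _ ->]; elim: j => [|j IHj]; first by rewrite expr1.
  by rewrite expnSr exprM root_exp_pchar.
have := max_poly_roots P_nz roots_conj conj_uniq.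
by rewrite size_map size_iota -ltnNge.
Qed.

Lemma uniq_prim_root_conj (R : idomainType) m q n (z : R) :
  m.-primitive_root z -> (0 < q)%N -> coprime m q ->
  (forall t, (0 < t < n)%N -> ~~ (m %| q ^ t - 1)%N) ->
  uniq [seq z ^+ (q ^ j) | j <- iota 0 n].
Proof.
move=> z_prim q_gt0 mq_coprime q_ord; rewrite map_inj_in_uniq ?iota_uniq //.
move=> j1 j2; rewrite !mem_iota !add0n.
wlog le_j12 : j1 j2 / (j1 <= j2)%N => [wlog_le|_ /andP[_ j2_lt]].
  by case/orP: (leq_total j1 j2) => /wlog_le IH ? ? ?; [|apply/esym]; apply: IH.
move/eqP; rewrite (eq_prim_root_expr z_prim) eq_sym eqn_mod_dvd ?leq_pexp2l //.
have -> : (q ^ j2 - q ^ j1 = q ^ j1 * (q ^ (j2 - j1) - 1))%N.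
  by rewrite mulnBr muln1 -expnD subnKC.
rewrite Gauss_dvdr ?coprimeXr // => m_dvd.
apply/eqP; rewrite eqn_leq le_j12 -subn_eq0 eqn0Ngt; apply/negP => t_gt0.
have t_lt : (j2 - j1 < n)%N := leq_ltn_trans (leq_subr _ _) j2_lt.
by have := q_ord (j2 - j1)%N; rewrite t_gt0 t_lt m_dvd => /(_ isT).
Qed.

Section PaleyCartesianPower.

Variables (K F : finFieldType) (psi : {rmorphism K -> F}) (b c : nat) (g : F).
Hypotheses (cardF : #|F| = (#|K| ^ b)%N) (c_dvd : (c %| #|K|.-1)%N)
  (g_prim : (b * c).-primitive_root g)
  (g_conj_uniq : uniq [seq g ^+ (#|K| ^ j) | j <- iota 0 b]).

Definition pow_comb (h : {ffun 'I_b -> K}) : F := \sum_(i < b) psi (h i) * g ^+ i.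

Lemma pow_combB h1 h2 : pow_comb (h1 - h2) = pow_comb h1 - pow_comb h2.
Proof. by rewrite -sumrB; apply: eq_bigr => i _; rewrite !ffunE rmorphB mulrBl. Qed.

Lemma pow_comb_single j t :
  pow_comb [ffun i => if i == j then t else 0] = psi t * g ^+ j.
Proof.
rewrite /pow_comb (bigD1 j) //= ffunE eqxx big1 ?addr0 // => i /negbTE i_j.
by rewrite ffunE i_j rmorph0 mul0r.
Qed.

Lemma pow_comb_eq0 h : pow_comb h = 0 -> h = 0.
Proof.
move=> h0; set Q := Poly (fgraph h).
have coefQ (i : 'I_b) : Q`_i = h i by rewrite coef_Poly nth_fgraph_ord.
have sizeQ : (size (map_poly psi Q) <= b)%N.
  by rewrite size_map_poly (leq_trans (size_Poly _)) // size_tuple card_ord.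
have charK : [pchar F].-nat #|K|.
  have [p _ pK] := finPcharP K.
  rewrite (eq_pnat _ (pcharf_eq (rmorph_pchar psi pK))) (card_pprimeChar pK).
  by rewrite pnatX pnat_id ?(pcharf_prime pK).
have Q_fixed i : (map_poly psi Q)`_i ^+ #|K| = (map_poly psi Q)`_i.
  by rewrite coef_map -rmorphXn expf_card.
have Q_root : root (map_poly psi Q) g.
  rewrite rootE (horner_coef_wide _ sizeQ) -[X in _ == X]h0; apply/eqP.
  by apply: eq_bigr => i _; rewrite coef_map coefQ.
have /eqP := conj_roots_poly_eq0 charK Q_fixed sizeQ g_conj_uniq Q_root.
by rewrite map_poly_eq0 => /eqP Q0; apply/ffunP => i; rewrite ffunE -coefQ Q0 coef0.
Qed.

Lemma pow_comb_bij : bijective pow_comb.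
Proof.
apply: inj_card_bij; last by rewrite card_ffun card_ord cardF.
move=> h1 h2 /eqP; rewrite -subr_eq0 -pow_combB => /eqP/pow_comb_eq0/eqP.
by rewrite subr_eq0 => /eqP.
Qed.

Lemma pow_comb_unity d : (pow_comb d ^+ (b * c) == 1) =
  [exists j, (d j ^+ c == 1) && [forall i, (i != j) ==> (d i == 0)]].
Proof.
have [zeta zeta_prim] := finField_prim_root c_dvd.
apply/idP/existsP => [/eqP/(prim_rootP g_prim)[n dn] | [j /andP[/eqP dj1 dj0]]].
  have b_gt0 : (0 < b)%N.
    by have := prim_order_gt0 g_prim; rewrite muln_gt0 => /andP[].
  pose j := Ordinal (ltn_pmod n b_gt0).
  have gb_unity : ((g ^+ b) ^+ (n %/ b)) ^+ c = 1.
    by rewrite -!exprM mulnCA mulnC exprM (prim_expr_order g_prim) expr1n.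
  have psi_zeta : c.-primitive_root (psi zeta) by rewrite fmorph_primitive_root.
  have [i gi] := prim_rootP psi_zeta gb_unity.
  have : pow_comb d = pow_comb [ffun k => if k == j then zeta ^+ i else 0].
    rewrite pow_comb_single dn rmorphXn -gi -exprM -exprD /=.
    by rewrite (mulnC b (n %/ b)%N) -divn_eq.
  move/(bij_inj pow_comb_bij) => ->; exists j.
  rewrite ffunE eqxx exprAC (prim_expr_order zeta_prim) expr1n eqxx /=.
  by apply/forallP => k; apply/implyP => /negbTE k_j; rewrite ffunE k_j.
have -> : d = [ffun i => if i == j then d j else 0].
  apply/ffunP => i; rewrite ffunE; case: eqVneq => [-> // | i_j].
  by apply/eqP; have /forallP/(_ i)/implyP := dj0; apply.
rewrite pow_comb_single exprMn -rmorphXn mulnC exprM dj1 expr1n rmorph1 mul1r.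
by rewrite mulnC exprAC (prim_expr_order g_prim) expr1n.
Qed.

Theorem paley_iso_dcart_pow :
  digraph_iso (paley_arc F (#|F|.-1 %/ (b * c)))
              (dcart_pow K (paley_arc K (#|K|.-1 %/ c)) b).
Proof.
have bc_gt0 := prim_order_gt0 g_prim.
have bc_dvd : (b * c %| #|F|.-1)%N.
  by rewrite (prim_order_dvd g_prim) expf_card_pred // (prim_root_eq0 g_prim) -lt0n.
have arcK_irr : irreflexive (paley_arc K (#|K|.-1 %/ c)).
  move=> u; rewrite paley_arcE // subrr expr0n eq_sym gtn_eqF ?oner_eq0 //.
  by move: bc_gt0; rewrite muln_gt0 => /andP[].
have [Phi_inv PhiK PhiVK] := pow_comb_bij.
exists Phi_inv; split; first by exists pow_comb.
move=> x y; rewrite -{1}(PhiVK x) -{1}(PhiVK y).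
move: (Phi_inv x) (Phi_inv y) => h1 h2.
rewrite paley_arcE // -pow_combB pow_comb_unity dcart_powE //.
apply: eq_existsb => j; rewrite paley_arcE // !ffunE; congr (_ && _).
by apply: eq_forallb => i; rewrite !ffunE subr_eq0 [h2 i == _]eq_sym.
Qed.

End PaleyCartesianPower.

Lemma coprime_dvd_expn_subn1 d m k :
  (0 < m)%N -> (0 < k)%N -> (d %| m ^ k - 1)%N -> coprime d m.
Proof.
move=> m_gt0 k_gt0 d_dvd; rewrite -(coprime_pexpr d m k_gt0).
by apply: coprime_dvdl d_dvd _; rewrite subn1 coprimePn // expn_gt0 m_gt0.
Qed.

Theorem mainTheorem2 (p a b c : nat) (F K : finFieldType) :
  prime p -> odd p -> (0 < a)%N -> (0 < b)%N -> (0 < c)%N ->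
  primitive_divisor c p a ->
  primitive_divisor (b * c) p (a * b) ->
  odd (b * c) ->
  #|F| = (p ^ (a * b))%N -> #|K| = (p ^ a)%N ->
  digraph_iso (paley_arc F ((p ^ (a * b) - 1) %/ (b * c)))
              (dcart_pow K (paley_arc K ((p ^ a - 1) %/ c)) b).
Proof.
move=> p_pr _ a_gt0 b_gt0 _ [c_dvd _] [bc_dvd bc_prim] _ cardF cardK.
have cardFK : #|F| = (#|K| ^ b)%N by rewrite cardF cardK expnM.
have [psi] := finField_rmorph_exists (card_finPcharP cardK p_pr)
  (card_finPcharP cardF p_pr) cardFK.
have predF : #|F|.-1 = (p ^ (a * b) - 1)%N by rewrite cardF subn1.
have predK : #|K|.-1 = (p ^ a - 1)%N by rewrite cardK subn1.
have [g g_prim] : exists g : F, (b * c).-primitive_root g.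
  by apply: finField_prim_root; rewrite predF.
have pa_gt0 : (0 < p ^ a)%N by rewrite expn_gt0 prime_gt0.
rewrite -predF -predK; apply: (paley_iso_dcart_pow psi cardFK _ g_prim).
  by rewrite predK.
have bc_coprime : coprime (b * c) (p ^ a).
  by apply: coprime_dvd_expn_subn1 pa_gt0 b_gt0 _; rewrite -expnM.
rewrite cardK; apply: uniq_prim_root_conj g_prim pa_gt0 bc_coprime _.
move=> t /andP[t_gt0 t_lt]; rewrite -expnM; apply: bc_prim.
  by rewrite muln_gt0 a_gt0.
by rewrite ltn_pmul2l.
Qed.
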